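(* Let $R$ be a commutative ring and let $(A,d)$ be a differential graded $R$-algebra. If the graded algebra $\ker(d)$ is graded-Artinian, then $(A,d)$ is dg-Noetherian and dg-Artinian.
   Context: A differential graded (dg) $R$-algebra $(A,d)$ is a $\mathbb{Z}$-graded $R$-algebra $A$ with an $R$-linear endomorphism $d$, homogeneous of degree $1$, with $d^2=0$ and $d(ab)=d(a)b+(-1)^{|a|}a\,d(b)$ for homogeneous $a,b$. Then $\ker(d)$ is a graded subalgebra of $A$. A graded algebra is graded-Artinian if it satisfies the descending chain condition on graded ideals. A dg-ideal of $(A,d)$ is a graded ideal $I$ with $d(I)\subseteq I$; $(A,d)$ is dg-Noetherian (resp. dg-Artinian) if it satisfies the ascending (resp. descending) chain condition on dg-ideals (i.e. on dg-submodules of $A$ viewed as a dg-module over itself). *)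

From HB Require Import structures.
From mathcomp Require Import all_boot all_order all_algebra.
Set Implicit Arguments. Unset Strict Implicit. Unset Printing Implicit Defensive.
Import Order.TTheory GRing.Theory Num.Theory.
Local Open Scope ring_scope.

(* A Z-grading of an R-algebra A: homogeneous components  comp n  (n : int),
   given as predicates "x is homogeneous of degree n". *)
Section Graded.
Variables (R : comPzRingType) (A : algType R).

Definition grading_submod (comp : int -> A -> Prop) :=
  forall n, comp n 0 /\ (forall x y, comp n x -> comp n y -> comp n (x + y))
            /\ (forall (r : R) x, comp n x -> comp n (r *: x)).

Definition grading_direct (comp : int -> A -> Prop) :=
  (forall a : A, exists (s : seq int) (f : int -> A),
      uniq s /\ (forall n, comp n (f n)) /\ a = \sum_(n <- s) f n) /\
  (forall (s : seq int) (f : int -> A),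
      uniq s -> (forall n, comp n (f n)) -> \sum_(n <- s) f n = 0 ->
      forall n, n \in s -> f n = 0).

Definition grading_mul (comp : int -> A -> Prop) :=
  comp 0 1 /\ forall m n x y, comp m x -> comp n y -> comp (m + n) (x * y).

Definition is_graded_algebra (comp : int -> A -> Prop) :=
  [/\ grading_submod comp, grading_direct comp & grading_mul comp].

Definition is_differential (comp : int -> A -> Prop) (d : A -> A) :=
  [/\ linear d,
      (forall n x, comp n x -> comp (n + 1) (d x)),
      (forall x, d (d x) = 0) &
      (forall n a b, comp n a ->
         d (a * b) = d a * b + (-1) ^+ `|n|%N * (a * d b))].

Definition is_dg_algebra (comp : int -> A -> Prop) (d : A -> A) :=
  is_graded_algebra comp /\ is_differential comp d.

Definition graded_subset (comp : int -> A -> Prop) (I : A -> Prop) :=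
  forall (s : seq int) (f : int -> A),
    uniq s -> (forall n, comp n (f n)) -> I (\sum_(n <- s) f n) ->
    forall n, n \in s -> I (f n).

Definition left_ideal_in (S : A -> Prop) (I : A -> Prop) :=
  [/\ forall x, I x -> S x,
      I 0,
      (forall x y, I x -> I y -> I (x + y)) &
      (forall a x, S a -> I x -> I (a * x))].

Definition kerd (d : A -> A) : A -> Prop := fun x => d x = 0.

Definition graded_ideal_of_kerd (comp : int -> A -> Prop) (d : A -> A)
  (I : A -> Prop) :=
  left_ideal_in (kerd d) I /\ graded_subset comp I.

(* dg-ideals of (A,d): graded left ideals (= graded submodules of A over
   itself) stable under d *)
Definition dg_ideal (comp : int -> A -> Prop) (d : A -> A) (I : A -> Prop) :=
  [/\ left_ideal_in (fun _ => True) I, graded_subset comp I &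
      forall x, I x -> I (d x)].

Definition same_set (I J : A -> Prop) := forall x, I x <-> J x.
Definition subset (I J : A -> Prop) := forall x, I x -> J x.

Definition ACC (P : (A -> Prop) -> Prop) :=
  forall I : nat -> (A -> Prop), (forall k, P (I k)) ->
    (forall k, subset (I k) (I k.+1)) ->
    exists N, forall k, (N <= k)%N -> same_set (I k) (I N).

Definition DCC (P : (A -> Prop) -> Prop) :=
  forall I : nat -> (A -> Prop), (forall k, P (I k)) ->
    (forall k, subset (I k.+1) (I k)) ->
    exists N, forall k, (N <= k)%N -> same_set (I k) (I N).

Definition kerd_graded_artinian (comp : int -> A -> Prop) (d : A -> A) :=
  DCC (graded_ideal_of_kerd comp d).

Definition dg_noetherian (comp : int -> A -> Prop) (d : A -> A) :=
  ACC (dg_ideal comp d).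

Definition dg_artinian (comp : int -> A -> Prop) (d : A -> A) :=
  DCC (dg_ideal comp d).

End Graded.

(** Inside a larger dg-ideal, a dg-ideal I is pinned down by its cycles
    I ∩ ker d and its boundaries d(I), which are graded left ideals of the
    graded ring ker d: if I ⊆ I' have the same cycles and boundaries and
    x ∈ I', then d x = d y for some y ∈ I, and x - y is a cycle of I', so
    x ∈ I.  Hence chains of dg-ideals stabilise as soon as the corresponding
    chains of graded ideals of ker d do.  For descending chains this is the
    hypothesis; for ascending ones we prove the graded Hopkins-Levitzki
    theorem for a graded subring S with DCC on graded left ideals.  The
    graded Jacobson radical J is a finite irredundant meet of maximal graded
    ideals, which makes every subquotient killed by J semisimple, and a
    semisimple subquotient with DCC has ACC.  A graded Nakayama argument
    shows that J is nilpotent, and ACC climbs the finite filtration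
    S ⊇ J ⊇ J^2 ⊇ ... ⊇ J^n = 0. *)

From mathcomp Require Import all_boot all_algebra.
From mathcomp Require Import zify boolp classical_sets.
Set Implicit Arguments. Unset Strict Implicit. Unset Printing Implicit Defensive.
Import GRing.Theory.
Local Open Scope ring_scope.
Local Open Scope classical_set_scope.

Lemma dependent_choice (T : Type) (P : nat -> T -> Prop) (rel : T -> T -> Prop) :
    (exists x, P 0%N x) -> (forall i x, P i x -> exists y, P i.+1 y /\ rel y x) ->
  exists f : nat -> T, forall i, P i (f i) /\ rel (f i.+1) (f i).
Proof.
move=> /cid[x0 Px0] /(_ _ _ _)/cid step.
pose fix f i : {x | P i x} :=
  if i is i'.+1 then
    let: exist x Px := f i' in let: exist y Py := step i' x Px in exist _ y Py.1
  else exist _ x0 Px0.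
exists (fun i => sval (f i)) => i; split; first exact: svalP.
by rewrite /=; case: (f i) => x Px; case: (step i x Px) => y [? ?].
Qed.

Lemma subset_chain (T : Type) (I : nat -> set T) :
  (forall k, I k `<=` I k.+1) -> {homo I : i j / (i <= j)%N >-> i `<=` j}.
Proof. exact: homo_leq (@subset_refl _) (@subset_trans _). Qed.

Lemma subset_chain_dec (T : Type) (I : nat -> set T) :
  (forall k, I k.+1 `<=` I k) -> {homo I : i j / (i <= j)%N >-> j `<=` i}.
Proof.
by apply: homo_leq => [X|Y X Z XY YZ]; [exact: subset_refl | exact: subset_trans YZ XY].
Qed.

Section ChainConditions.
Variables (R : comPzRingType) (A : algType R).

Lemma ACC_sub (P Q : set (set A)) : P `<=` Q -> ACC Q -> ACC P.
Proof. by move=> PQ accQ I /(_ _)/PQ; apply: accQ. Qed.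

Lemma DCC_sub (P Q : set (set A)) : P `<=` Q -> DCC Q -> DCC P.
Proof. by move=> PQ dccQ I /(_ _)/PQ; apply: dccQ. Qed.

Lemma ACCP (P : set (set A)) : ACC P <-> forall I : nat -> set A,
  (forall k, P (I k)) -> (forall k, I k `<=` I k.+1) ->
  exists N, forall k, (N <= k)%N -> I k `<=` I N.
Proof.
split=> accP I PI incI; have [N IN] := accP I PI incI; exists N => k Nk x.
  by case: (IN k Nk x).
split; first exact: IN.
exact: (@subset_chain _ I incI N k Nk x).
Qed.

End ChainConditions.

Lemma big_mem_if (T : eqType) (V : nmodType) (s u : seq T) (f : T -> V) :
  uniq s -> uniq u -> {subset s <= u} ->
  \sum_(k <- u) (if k \in s then f k else 0) = \sum_(k <- s) f k.
Proof.
move=> us uu su; rewrite -big_mkcond -big_filter; apply: perm_big.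
apply: uniq_perm; rewrite ?filter_uniq // => k.
by rewrite mem_filter andb_idr // => /su.
Qed.

(** * Homogeneous components *)

Section GradedAlgebra.
Variables (R : comPzRingType) (A : algType R) (comp : int -> A -> Prop).
Hypotheses (comp_submod : grading_submod comp) (comp_direct : grading_direct comp)
  (comp_mul : grading_mul comp).

Lemma comp0 n : comp n 0. Proof. by case: (comp_submod n). Qed.

Lemma compD n x y : comp n x -> comp n y -> comp n (x + y).
Proof. by case: (comp_submod n) => _ [+ _]; apply. Qed.

Lemma compN n x : comp n x -> comp n (- x).
Proof. by case: (comp_submod n) => _ [_ compZ] /(compZ (-1)); rewrite scaleN1r. Qed.

Lemma compB n x y : comp n x -> comp n y -> comp n (x - y).
Proof. by move=> cx cy; apply/compD/compN. Qed.

Lemma comp1 : comp 0 1. Proof. by case: comp_mul. Qed.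

Lemma compM m n x y : comp m x -> comp n y -> comp (m + n) (x * y).
Proof. by case: comp_mul => _; apply. Qed.

Definition hsupp (x : A) : seq int := sval (cid (comp_direct.1 x)).
Definition hcoef (x : A) : int -> A :=
  let: exist _ ex_f := cid (comp_direct.1 x) in sval (cid ex_f).

Lemma hcoefP x : [/\ uniq (hsupp x), forall n, comp n (hcoef x n)
  & x = \sum_(n <- hsupp x) hcoef x n].
Proof.
rewrite /hcoef /hsupp; case: (cid (comp_direct.1 x)) => s0 /= ex_f.
by case: (cid ex_f) => f /= [? []].
Qed.

Lemma hsupp_uniq x : uniq (hsupp x). Proof. by case: (hcoefP x). Qed.

(* [hsupp x] and [hcoef x] describe an arbitrarily chosen homogeneous
   decomposition of x; by directness ([hproj_sum]) [hproj n x] is the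
   degree-n component of x. *)
Definition hproj (n : int) (x : A) : A := if n \in hsupp x then hcoef x n else 0.

Lemma hproj_homog n x : comp n (hproj n x).
Proof. by rewrite /hproj; case: ifP => _; [case: (hcoefP x) | apply: comp0]. Qed.

Lemma hproj_notin n x : n \notin hsupp x -> hproj n x = 0.
Proof. by rewrite /hproj => /negbTE ->. Qed.

Lemma sum_hproj (u : seq int) x : uniq u -> {subset hsupp x <= u} ->
  \sum_(k <- u) hproj k x = x.
Proof. by case: (hcoefP x) => us _ {3}-> uu su; rewrite big_mem_if. Qed.

Lemma hprojE x : x = \sum_(n <- hsupp x) hproj n x.
Proof. by rewrite sum_hproj ?hsupp_uniq. Qed.

Lemma hproj_sum (s : seq int) (f : int -> A) : uniq s -> (forall k, comp k (f k)) ->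
  forall n, hproj n (\sum_(k <- s) f k) = if n \in s then f n else 0.
Proof.
move=> us cf n; set x := \sum_(k <- s) f k.
pose u := undup (hsupp x ++ s).
have uu : uniq u by apply: undup_uniq.
pose g k := hproj k x - (if k \in s then f k else 0).
have cg k : comp k (g k).
  by apply: compB; [apply: hproj_homog | case: ifP => _; [apply: cf | apply: comp0]].
have sg : \sum_(k <- u) g k = 0.
  by rewrite sumrB sum_hproj ?big_mem_if ?subrr // => k ks;
    rewrite /u mem_undup mem_cat ks ?orbT.
case nu: (n \in u).
  by have /eqP := comp_direct.2 u g uu cg sg n nu; rewrite subr_eq0 => /eqP.
move: nu; rewrite mem_undup mem_cat => /norP[nx /negbTE ->].
exact: hproj_notin.
Qed.

Lemma hproj_homog_eq m n x : comp m x -> hproj n x = if n == m then x else 0.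
Proof.
move=> cx; pose f k := if k == m then x else 0.
have cf k : comp k (f k) by rewrite /f; case: eqP => [->|_] //; apply: comp0.
have := @hproj_sum [:: m] f isT cf n.
by rewrite big_seq1 /f eqxx inE => ->; case: eqP.
Qed.

Lemma hprojD n x y : hproj n (x + y) = hproj n x + hproj n y.
Proof.
pose u := undup (hsupp x ++ hsupp y).
have uu : uniq u by apply: undup_uniq.
have -> : x + y = \sum_(k <- u) (hproj k x + hproj k y).
  by rewrite big_split /= !sum_hproj // => k ks; rewrite /u mem_undup mem_cat ks ?orbT.
rewrite hproj_sum //; last by move=> k; apply/compD/hproj_homog/hproj_homog.
case: ifP => // /negbT; rewrite mem_undup mem_cat => /norP[xk yk].
by rewrite !hproj_notin // addr0.
Qed.

Lemma hproj0 n : hproj n 0 = 0.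
Proof. by apply: (addrI (hproj n 0)); rewrite -hprojD !addr0. Qed.

Lemma hproj_shift (f : A -> A) m : {morph f : x y / x + y} ->
    (forall k y, comp k y -> comp (k + m) (f y)) ->
  forall n x, hproj n (f x) = f (hproj (n - m) x).
Proof.
move=> fD f_homog n x.
have f0 : f 0 = 0 by apply: (addrI (f 0)); rewrite -fD !addr0.
have -> : f x = \sum_(k <- map (fun k => k + m) (hsupp x)) f (hproj (k - m) x).
  rewrite big_map {1}(hprojE x) (big_morph f fD f0).
  by apply: eq_bigr => k _; rewrite addrK.
rewrite hproj_sum; first last.
- by move=> k; have := f_homog _ _ (hproj_homog (k - m) x); rewrite subrK.
- by rewrite map_inj_uniq ?hsupp_uniq // => i j /addIr.
case: ifP => // /negbT nin; rewrite hproj_notin ?f0 //.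
by apply: contra nin => h; apply/mapP; exists (n - m); rewrite ?subrK.
Qed.

Lemma hprojMl m n a x : comp m a -> hproj n (a * x) = a * hproj (n - m) x.
Proof.
move=> ca; apply: (@hproj_shift ( *%R a)) => [y z|k y cy]; first exact: mulrDr.
by rewrite addrC; apply: compM.
Qed.

Lemma hprojMr m n a x : comp m a -> hproj n (x * a) = hproj (n - m) x * a.
Proof.
move=> ca; apply: (@hproj_shift ( *%R^~ a)) => [y z|k y cy]; first exact: mulrDl.
exact: compM.
Qed.

Lemma homog_ind (P I : set A) : (forall n x, I x -> I (hproj n x)) ->
    P 0 -> (forall x y, P x -> P y -> P (x + y)) ->
    (forall n x, I x -> comp n x -> P x) ->
  forall x, I x -> P x.
Proof.
move=> I_hproj P0 PD P_homog x Ix; rewrite (hprojE x).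
by apply: (big_ind P) => // n _; apply: (P_homog n); [apply: I_hproj | apply: hproj_homog].
Qed.

Lemma graded_subsetP (I : set A) :
  I 0 -> graded_subset comp I <-> (forall n x, I x -> I (hproj n x)).
Proof.
move=> I0; split=> [gI n x Ix | I_hproj s f us cf Is n ns].
  case ns: (n \in hsupp x); last by rewrite hproj_notin ?ns.
  apply: (gI (hsupp x) (hproj^~ x)) => //; rewrite ?hsupp_uniq -?hprojE //.
  by move=> k; apply: hproj_homog.
by have := I_hproj n _ Is; rewrite hproj_sum // ns.
Qed.

(** * Graded left ideals of a graded subring *)

Variable S : set A.
Hypotheses (S0 : S 0) (S1 : S 1) (SD : forall x y, S x -> S y -> S (x + y))
  (SN : forall x, S x -> S (- x)) (SM : forall x y, S x -> S y -> S (x * y))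
  (S_hproj : forall n x, S x -> S (hproj n x)).

Definition gideal (I : set A) :=
  left_ideal_in S I /\ forall n x, I x -> I (hproj n x).

Section GradedIdealTheory.
Variable I : set A.
Hypothesis gI : gideal I.

Lemma gideal_sub : I `<=` S. Proof. by case: gI => -[]. Qed.
Lemma gideal0 : I 0. Proof. by case: gI => -[]. Qed.
Lemma gidealD x y : I x -> I y -> I (x + y).
Proof. by case: gI => -[_ _ D _] _; apply: D. Qed.
Lemma gidealM a x : S a -> I x -> I (a * x).
Proof. by case: gI => -[_ _ _ M] _; apply: M. Qed.
Lemma gideal_hproj n x : I x -> I (hproj n x).
Proof. by case: gI => _ P; apply: P. Qed.

Lemma gidealN x : I x -> I (- x).
Proof. by rewrite -mulN1r; apply/gidealM/SN. Qed.

Lemma gidealB x y : I x -> I y -> I (x - y).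
Proof. by move=> Ix /gidealN; apply: gidealD. Qed.

End GradedIdealTheory.

Lemma gidealS : gideal S. Proof. by split; first split. Qed.

Definition addI (I J : set A) := [set a + b | a in I & b in J].
Definition rmulI (Q : set A) (y : A) := [set q * y | q in Q].
Definition colon (K : set A) (y : A) := [set a | S a /\ K (a * y)].

Lemma addIP I J x : addI I J x <-> exists a b, [/\ I a, J b & x = a + b].
Proof.
split=> [[a Ia [b Jb <-]] | [a [b [Ia Jb ->]]]]; first by exists a, b.
by exists a => //; exists b.
Qed.

Lemma gideal_addI I J : gideal I -> gideal J -> gideal (addI I J).
Proof.
move=> gI gJ; split; first split.
- by move=> _ [a /(gideal_sub gI) Sa [b /(gideal_sub gJ) Sb <-]]; apply: SD.
- by apply/addIP; exists 0, 0; split; rewrite ?addr0 //; apply: gideal0.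
- move=> _ _ [a Ia [b Jb <-]] [a' Ia' [b' Jb' <-]]; apply/addIP.
  by exists (a + a'), (b + b'); split; [apply: gidealD.. | by rewrite addrACA].
- move=> s _ Ss [a Ia [b Jb <-]]; apply/addIP.
  by exists (s * a), (s * b); split; rewrite ?mulrDr //; apply: gidealM.
- move=> n _ [a Ia [b Jb <-]]; apply/addIP.
  by exists (hproj n a), (hproj n b); split; rewrite ?hprojD //; apply: gideal_hproj.
Qed.

Lemma gideal_setI I J : gideal I -> gideal J -> gideal (I `&` J).
Proof.
move=> gI gJ; split; first split.
- by move=> x [/(gideal_sub gI)].
- by split; [apply: (gideal0 gI) | apply: (gideal0 gJ)].
- by move=> x y [Ix Jx] [Iy Jy]; split; [apply: (gidealD gI) | apply: (gidealD gJ)].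
- by move=> a x Sa [Ix Jx]; split; [apply: (gidealM gI) | apply: (gidealM gJ)].
- by move=> n x [Ix Jx]; split; [apply: (gideal_hproj gI) | apply: (gideal_hproj gJ)].
Qed.

Lemma subset_addIl I J : gideal J -> I `<=` addI I J.
Proof.
by move=> gJ x Ix; apply/addIP; exists x, 0; split; rewrite ?addr0 //; apply: gideal0.
Qed.

Lemma subset_addIr I J : gideal I -> J `<=` addI I J.
Proof.
by move=> gI x Jx; apply/addIP; exists 0, x; split; rewrite ?add0r //; apply: gideal0.
Qed.

Lemma addI_subset I J K : gideal K -> I `<=` K -> J `<=` K -> addI I J `<=` K.
Proof. by move=> gK IK JK _ [a /IK Ka [b /JK Kb <-]]; apply: gidealD. Qed.

Lemma addSI I I' J : I `<=` I' -> addI I J `<=` addI I' J.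
Proof. by move=> II' _ [a /II' I'a [b Jb <-]]; exists a => //; exists b. Qed.

Lemma gideal_rmulI Q m y : gideal Q -> comp m y -> S y -> gideal (rmulI Q y).
Proof.
move=> gQ cy Sy; split; first split.
- by move=> _ [q /(gideal_sub gQ) Sq <-]; apply: SM.
- by exists 0; rewrite ?mul0r //; apply: gideal0.
- by move=> _ _ [q Qq <-] [q' Qq' <-]; exists (q + q'); rewrite ?mulrDl //; apply: gidealD.
- by move=> a _ Sa [q Qq <-]; exists (a * q); rewrite ?mulrA //; apply: gidealM.
- move=> n _ [q Qq <-]; exists (hproj (n - m) q); first exact: gideal_hproj.
  by rewrite (hprojMr _ _ cy).
Qed.

Lemma rmulI_subset Q y L : Q `<=` S -> gideal L -> L y -> rmulI Q y `<=` L.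
Proof. by move=> QS gL Ly _ [q /QS Sq <-]; apply: gidealM. Qed.

Lemma gideal_colon K m y : gideal K -> comp m y -> gideal (colon K y).
Proof.
move=> gK cy; split; first split.
- by move=> a [].
- by split; rewrite ?mul0r //; apply: gideal0.
- by move=> a b [Sa Kay] [Sb Kby]; split; rewrite ?mulrDl; [apply: SD | apply: gidealD].
- by move=> a x Sa [Sx Kxy]; split; rewrite -?mulrA; [apply: SM | apply: gidealM].
- move=> n a [Sa Kay]; split; first exact: S_hproj.
  by have := gideal_hproj gK (n + m) Kay; rewrite (hprojMr _ _ cy) addrK.
Qed.

Hypothesis gideal_dcc : DCC gideal.

Lemma gideal_minimal (F : set (set A)) : F `<=` gideal -> F !=set0 ->
  exists2 I, F I & forall J, F J -> J `<=` I -> I `<=` J.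
Proof.
move=> Fg [I0 FI0]; apply: contrapT => nomin.
have smaller I : F I -> exists J, F J /\ (J `<=` I /\ ~ I `<=` J).
  move=> FI; apply: contrapT => noJ; apply: nomin; exists I => // J FJ JI.
  by apply: contrapT => IJ; apply: noJ; exists J.
have [f fP] := @dependent_choice _ (fun _ => F) (fun J I => J `<=` I /\ ~ I `<=` J)
  (ex_intro _ I0 FI0) (fun _ => smaller).
have [N fN] := gideal_dcc (fun k => Fg _ (fP k).1) (fun k => (fP k).2.1).
by apply: (fP N).2.2 => x /(fN N.+1 (leqnSn N) x).2.
Qed.

(** * The graded Jacobson radical and semisimplicity *)

(* [covby K L]: L/K is a graded-simple S-module.  The graded Jacobson radical
   [jac] is the common annihilator of all these subquotients. *)
Definition covby (K L : set A) := [/\ gideal K, gideal L, K `<=` L, ~ L `<=` K &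
  forall Q, gideal Q -> K `<=` Q -> Q `<=` L -> Q `<=` K \/ L `<=` Q].

Definition gmaximal (M : set A) := covby M S.

Definition jac := [set a | S a /\ forall K L, covby K L -> forall y, L y -> K (a * y)].

Lemma gideal_jac : gideal jac.
Proof.
split; first split.
- by move=> a [].
- by split=> // K L [gK _ _ _ _] y _; rewrite mul0r; apply: (gideal0 gK).
- move=> a b [Sa aKL] [Sb bKL]; split=> [|K L KL y Ly]; first exact: SD.
  case: (KL) => gK _ _ _ _; rewrite mulrDl.
  by apply: (gidealD gK); [apply: aKL KL _ Ly | apply: bKL KL _ Ly].
- move=> s a Ss [Sa aKL]; split=> [|K L KL y Ly]; first exact: SM.
  case: (KL) => gK _ _ _ _; rewrite -mulrA.
  by apply: (gidealM gK) => //; apply: aKL KL _ Ly.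
- move=> n a [Sa aKL]; split=> [|K L KL]; first exact: S_hproj.
  case: (KL) => gK gL _ _ _.
  apply: (homog_ind (P := fun y => K (hproj n a * y)) (gideal_hproj gL)).
  + by rewrite mulr0; apply: (gideal0 gK).
  + by move=> y z Ky Kz; rewrite mulrDr; apply: (gidealD gK).
  move=> m y Ly cy; have := gideal_hproj gK (n + m) (aKL K L KL y Ly).
  by rewrite (hprojMr _ _ cy) addrK.
Qed.

Lemma jacMr a s : jac a -> S s -> jac (a * s).
Proof.
move=> [Sa aKL] Ss; split=> [|K L KL y Ly]; first exact: SM.
by case: (KL) => _ gL _ _ _; rewrite -mulrA; apply: aKL KL _ _; apply: (gidealM gL).
Qed.

Lemma jac_sub_maximal M : gmaximal M -> jac `<=` M.
Proof. by move=> maxM a [_ /(_ M S maxM 1 S1)]; rewrite mulr1. Qed.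

Lemma colon_maximal K L y m :
  covby K L -> L y -> comp m y -> ~ K y -> gmaximal (colon K y).
Proof.
move=> [gK gL KL LK KLcov] Ly cy Ky; have Sy := gideal_sub gL Ly.
have gKy := gideal_colon gK cy; split=> //.
- by move=> a [].
- by move=> /(_ 1 S1) [_]; rewrite mul1r.
move=> Q gQ KyQ QS; have gQy := gideal_rmulI gQ cy Sy.
have [QyK | LQy] := KLcov _ (gideal_addI gK gQy) (subset_addIl gQy)
  (addI_subset gL KL (rmulI_subset (gideal_sub gQ) gL Ly)).
  left=> q Qq; split; first exact: gideal_sub gQ _ Qq.
  by apply/QyK/subset_addIr => //; exists q.
right=> s Ss; rewrite -(mulr1 s); apply: (gidealM gQ) => //.
have /addIP [k [_ [Kk [q Qq <-] ey]]] := LQy y Ly.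
have Q1q : Q (1 - q).
  by apply: KyQ; split; [apply/SD/SN/(gideal_sub gQ) | rewrite mulrBl mul1r {1}ey addrK].
by rewrite -(subrK q 1); apply: (gidealD gQ).
Qed.

Definition interval (K L : set A) := [set I | [/\ gideal I, K `<=` I & I `<=` L]].

Lemma ACC_interval_trans K L P : gideal L -> gideal P -> K `<=` L -> L `<=` P ->
  ACC (interval K L) -> ACC (interval L P) -> ACC (interval K P).
Proof.
move=> gL gP KL LP /ACCP accKL /ACCP accLP; apply/ACCP => N NKP incN.
have gN k : gideal (N k) by case: (NKP k).
have [M1 capN] : exists M1, forall k, (M1 <= k)%N -> N k `&` L `<=` N M1 `&` L.
  apply: accKL => [k | k x [Nx Lx]]; last by split=> //; apply: incN.
  case: (NKP k) => _ KN _; split; [exact: gideal_setI | | by move=> x []].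
  by move=> x Kx; split; [apply: KN | apply: KL].
have [M2 addN] : exists M2, forall k, (M2 <= k)%N -> addI (N k) L `<=` addI (N M2) L.
  apply: accLP => k; last exact/addSI/incN.
  case: (NKP k) => _ _ NP; split; [exact: gideal_addI | exact: subset_addIr |].
  exact: addI_subset.
exists (maxn M1 M2) => k; rewrite geq_max => /andP[M1k M2k] x Nkx.
have incNM := subset_chain incN; set M := maxn M1 M2.
have /addIP [a [l [Na Ll xE]]] : addI (N M) L x.
  by apply/(addSI (incNM _ _ (leq_maxr M1 M2)))/(addN k M2k)/subset_addIl.
have Nkl : N k l.
  have -> : l = x - a by rewrite xE addrC addKr.
  by apply: (gidealB (gN k)) => //; apply: (incNM M k _ _ Na); rewrite geq_max M1k.
rewrite xE; apply: (gidealD (gN _)) => //; apply: (incNM M1 _ (leq_maxl M1 M2)).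
by have [] := capN k M1k l (conj Nkl Ll).
Qed.

(* Intersecting with S makes the empty meet S rather than setT. *)
Definition meetS (Ms : nat -> set A) (D : set nat) := S `&` \bigcap_(u in D) Ms u.

Lemma gideal_meetS Ms D : (forall u, D u -> gideal (Ms u)) -> gideal (meetS Ms D).
Proof.
move=> gMs; split; first split.
- by move=> x [].
- by split=> // u Du; apply: gideal0 (gMs u Du).
- by move=> x y [Sx Msx] [Sy Msy]; split=> [|u Du]; [apply: SD | apply: gidealD; auto].
- by move=> a x Sa [Sx Msx]; split=> [|u Du]; [apply: SM | apply: gidealM; auto].
- by move=> n x [Sx Msx]; split=> [|u Du]; [apply: S_hproj | apply: gideal_hproj; auto].
Qed.

(* Take a minimal finite meet X of maximal graded ideals.  For L/K simple and
   y in L \ K homogeneous, (K : y) is maximal, so X ⊆ (K : y) by minimality. *)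
Lemma exists_maximal_meet_sub_jac : exists Ms m,
  (forall u, (u < m)%N -> gmaximal (Ms u)) /\ meetS Ms `I_m `<=` jac.
Proof.
pose F X := exists Ms m, (forall u, (u < m)%N -> gmaximal (Ms u)) /\ X = meetS Ms `I_m.
have Fg : F `<=` gideal.
  by move=> _ [Ms [m [maxMs ->]]]; apply: gideal_meetS => u /maxMs [].
have F0 : F (meetS (fun=> S) `I_0) by exists (fun=> S), 0%N.
have [_ [Ms [m [maxMs ->]]] minimal] := gideal_minimal Fg (ex_intro _ _ F0).
exists Ms, m; split=> // a Xa; split=> [|K L KL]; first by case: Xa.
case: (KL) => gK gL _ _ _.
apply: (homog_ind (P := fun y => K (a * y)) (gideal_hproj gL)) => [|y z Ky Kz|n y Ly cy].
- by rewrite mulr0; apply: (gideal0 gK).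
- by rewrite mulrDr; apply: (gidealD gK).
have [Ky|Ky] := EM (K y); first by apply: (gidealM gK) => //; case: Xa.
pose Ms' u := if (u < m)%N then Ms u else colon K y.
have FX' : F (meetS Ms' `I_m.+1).
  exists Ms', m.+1; split=> // u; rewrite /Ms'; case: ifP => [um _|_ _]; first exact: maxMs.
  exact: colon_maximal KL Ly cy Ky.
have X'X : meetS Ms' `I_m.+1 `<=` meetS Ms `I_m.
  move=> x [Sx Ms'x]; split=> // u um; have := Ms'x u (ltnW um).
  by rewrite /Ms' um.
have [_ /(_ m (ltnSn m))] := minimal _ FX' X'X a Xa.
by rewrite /Ms' ltnn => -[].
Qed.

Lemma exists_irredundant_maximal_meet : exists Ms m,
  [/\ forall u, (u < m)%N -> gmaximal (Ms u), meetS Ms `I_m `<=` jac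
    & forall t, (t < m)%N -> ~ meetS Ms (`I_m `\ t) `<=` Ms t].
Proof.
have [Ms [m [maxMs meet_jac]]] := exists_maximal_meet_sub_jac.
elim: m Ms maxMs meet_jac => [|m IHm] Ms maxMs meet_jac; first by exists Ms, 0%N.
have [[t tm redundant]|irred] :=
  EM (exists2 t, (t < m.+1)%N & meetS Ms (`I_m.+1 `\ t) `<=` Ms t); last first.
  by exists Ms, m.+1; split=> // t tm red; apply: irred; exists t.
apply: (IHm (Ms \o bump t)) => [u um | x [Sx Msx]].
  by apply: maxMs; rewrite /bump; case: (t <= u)%N; lia.
have Ex : meetS Ms (`I_m.+1 `\ t) x.
  split=> // v [/= vm /eqP vt]; have := Msx (unbump t v); rewrite /= unbumpK //.
  by apply; rewrite /= /unbump; case: ltnP => tv /=; lia.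
apply: meet_jac; split=> // v vm; have [->|vt] := eqVneq v t; first exact: redundant.
by case: Ex => _; apply; split=> //; apply/eqP.
Qed.

Section IrredundantMeet.
Variables (Ms : nat -> set A) (m : nat).
Hypotheses (maxMs : forall u, (u < m)%N -> gmaximal (Ms u))
  (meet_jac : meetS Ms `I_m `<=` jac)
  (irred : forall t, (t < m)%N -> ~ meetS Ms (`I_m `\ t) `<=` Ms t).

Let gMs u : (u < m)%N -> gideal (Ms u). Proof. by case/maxMs. Qed.

Let gE t : gideal (meetS Ms (`I_m `\ t)).
Proof. by apply: gideal_meetS => u [/gMs]. Qed.

Let meet_but_jac t x : (t < m)%N -> meetS Ms (`I_m `\ t) x -> Ms t x -> jac x.
Proof.
move=> tm [Sx Ex] Mtx; apply: meet_jac; split=> // u um.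
by have [->|ut] := eqVneq u t; last by apply: Ex; split=> //; apply/eqP.
Qed.

Lemma addI_meet_but t : (t < m)%N -> S `<=` addI (Ms t) (meetS Ms (`I_m `\ t)).
Proof.
move=> tm; case: (maxMs tm) => gMt _ _ _ Mt_max.
have [EMt|] := Mt_max _ (gideal_addI gMt (gE t)) (subset_addIl (gE t))
  (addI_subset gidealS (gideal_sub gMt) (gideal_sub (gE t))) => //.
by case: (irred tm) => x Ex; apply/EMt/subset_addIr.
Qed.

Lemma covby_jac_meet_but t : (t < m)%N -> covby jac (meetS Ms (`I_m `\ t)).
Proof.
move=> tm; split=> //.
- exact: gideal_jac.
- by move=> x Jx; split=> [|u [um _]]; [case: Jx | exact: jac_sub_maximal (maxMs um) _ Jx].
- by move=> EJ; apply: (irred tm) => x /EJ /(jac_sub_maximal (maxMs tm)).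
move=> Q gQ JQ QE; case: (maxMs tm) => gMt _ _ _ Mt_max.
have [QMt|SQMt] := Mt_max _ (gideal_addI gQ gMt) (subset_addIr gQ)
  (addI_subset gidealS (gideal_sub gQ) (gideal_sub gMt)).
  by left=> x Qx; apply: (meet_but_jac tm (QE x Qx)); apply/QMt/subset_addIl.
right=> e Ee; have /addIP [q [a [Qq Mta eE]]] := SQMt e (gideal_sub (gE t) Ee).
have Ea : meetS Ms (`I_m `\ t) a.
  have -> : a = e - q by rewrite eE addrC addKr.
  exact: (gidealB (gE t) Ee (QE q Qq)).
rewrite eE; apply: (gidealD gQ) => //; apply: JQ; exact: meet_but_jac tm Ea Mta.
Qed.

Lemma meet_but_subset T : gideal T -> jac `<=` T ->
  (forall t, (t < m)%N -> meetS Ms (`I_m `\ t) `<=` T) -> S `<=` T.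
Proof.
move=> gT JT ET.
suff meetT k : (k <= m)%N -> meetS Ms [set u | (k <= u < m)%N] `<=` T.
  by move=> x Sx; apply: (meetT m (leqnn m)); split=> // u /= /andP[mu um]; lia.
elim: k => [_ x [Sx Mx] | k IHk km x [Sx Mx]].
  by apply/JT/meet_jac; split=> // u um; apply: Mx.
have /addIP [a [e [Mka Ee xE]]] := addI_meet_but km Sx.
rewrite xE; apply: (gidealD gT); last exact: ET km _ Ee.
apply: IHk (ltnW km) _ _; split=> [|u /= /andP[ku um]].
  exact: gideal_sub (gMs km) _ Mka.
have [->|uk] := eqVneq u k; first done.
have -> : a = x - e by rewrite xE addrK.
apply: (gidealB (gMs um)); first by apply: Mx; rewrite /= um andbT ltn_neqAle eq_sym uk.
by case: Ee => _; apply; split=> //; apply/eqP.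
Qed.

End IrredundantMeet.

Lemma exists_covby_jac_not_sub T : gideal T -> jac `<=` T -> ~ T 1 ->
  exists2 N, covby jac N & ~ N `<=` T.
Proof.
move=> gT JT T1; have [Ms [m [maxMs meet_jac irred]]] := exists_irredundant_maximal_meet.
have [[t tm ET]|noET] := EM (exists2 t, (t < m)%N & ~ meetS Ms (`I_m `\ t) `<=` T).
  by exists (meetS Ms (`I_m `\ t)); first exact: covby_jac_meet_but.
case: T1; apply: (meet_but_subset maxMs meet_jac irred gT JT) => // t tm.
by apply: contrapT => ET; apply: noET; exists t.
Qed.

Lemma covby_addI_rmulI K N0 m y : gideal K -> covby jac N0 -> comp m y -> S y ->
    (forall j, jac j -> K (j * y)) -> ~ rmulI N0 y `<=` K ->
  covby K (addI K (rmulI N0 y)).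
Proof.
move=> gK [gJ gN0 JN0 _ N0cov] cy Sy JyK N0yK; have gN0y := gideal_rmulI gN0 cy Sy.
split=> //; [exact: gideal_addI | exact: subset_addIl |..].
  by move=> NK; apply: N0yK => z /(subset_addIr gK) /NK.
move=> Q gQ KQ QN; have gQ' := gideal_setI (gideal_colon gQ cy) gN0.
have JQ' : jac `<=` colon Q y `&` N0.
  by move=> j Jj; split; [split; [case: Jj | apply/KQ/JyK] | apply: JN0].
have [Q'J|N0Q'] := N0cov _ gQ' JQ' (fun x => @proj2 _ _); [left|right].
  move=> z Qz; have /addIP [k [_ [Kk [e N0e <-] zE]]] := QN z Qz.
  rewrite zE; apply: (gidealD gK Kk); apply/JyK/Q'J; split=> //; split.
    exact: gideal_sub gN0 _ N0e.
  have -> : e * y = z - k by rewrite zE addrC addKr.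
  exact: (gidealB gQ Qz (KQ _ Kk)).
move=> _ /addIP [k [_ [Kk [e N0e <-] ->]]].
by apply: (gidealD gQ); [apply: KQ | case: (N0Q' e N0e) => -[]].
Qed.

Lemma exists_covby_not_sub K L T : gideal K -> gideal L -> gideal T ->
    K `<=` T -> T `<=` L -> ~ L `<=` T -> (forall j y, jac j -> L y -> K (j * y)) ->
  exists N, [/\ covby K N, N `<=` L & ~ N `<=` T].
Proof.
move=> gK gL gT KT TL LT JLK.
have [m [y [Ly cy Ty]]] : exists m y, [/\ L y, comp m y & ~ T y].
  apply: contrapT => noy; apply: LT.
  apply: (homog_ind (P := T) (gideal_hproj gL)) => [|x z|n x Lx cx].
  - exact: (gideal0 gT).
  - exact: (gidealD gT).
  - by apply: contrapT => Tx; apply: noy; exists n, x.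
have Sy := gideal_sub gL Ly.
have [N0 N0cov N0T] : exists2 N0, covby jac N0 & ~ N0 `<=` colon T y.
  apply: exists_covby_jac_not_sub; first exact: gideal_colon gT cy.
    by move=> j Jj; split; [case: Jj | apply/KT/JLK].
  by case; rewrite mul1r.
case: (N0cov) => _ gN0 _ _ _.
have [c N0c Tcy] : exists2 c, N0 c & ~ T (c * y).
  apply: contrapT => noc; apply: N0T => c N0c; split; first exact: gideal_sub gN0 _ N0c.
  by apply: contrapT => Tcy; apply: noc; exists c.
have cyN0 : rmulI N0 y (c * y) by exists c.
exists (addI K (rmulI N0 y)); split.
- apply: covby_addI_rmulI cy Sy _ _ => // [j Jj|N0K]; first exact: JLK.
  exact/Tcy/KT/N0K.
- apply: addI_subset (rmulI_subset (gideal_sub gN0) gL Ly) => // x /KT; exact: TL.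
- by move=> NT; apply/Tcy/NT/subset_addIr.
Qed.

Lemma gideal_bigcup_chain (F : set (set A)) :
  F !=set0 -> F `<=` gideal -> total_on F subset -> gideal (\bigcup_(C in F) C).
Proof.
move=> [C0 FC0] Fg totF; split; first split.
- by move=> x [C FC]; apply: gideal_sub (Fg _ FC) _.
- by exists C0 => //; apply: gideal0 (Fg _ FC0).
- move=> x y [C FC Cx] [C' FC' C'y]; have [CC'|C'C] := totF _ _ FC FC'.
    by exists C' => //; apply: (gidealD (Fg _ FC')) => //; apply: CC'.
  by exists C => //; apply: (gidealD (Fg _ FC)) => //; apply: C'C.
- by move=> a x Sa [C FC Cx]; exists C => //; apply: (gidealM (Fg _ FC)).
- by move=> n x [C FC Cx]; exists C => //; apply: (gideal_hproj (Fg _ FC)).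
Qed.

Definition partial_complement (K L Q : set A) :=
  [set C | [/\ gideal C, K `<=` C, C `<=` L & Q `&` C `<=` K]].

Lemma exists_maximal_partial_complement K L Q : gideal K -> gideal L -> K `<=` L ->
  exists2 C, partial_complement K L Q C &
    forall C', partial_complement K L Q C' -> C `<=` C' -> C' `<=` C.
Proof.
move=> gK gL KL; set D := partial_complement K L Q; have DK : D K by split=> // x [].
pose le (C C' : {C | D C}) := `[< sval C `<=` sval C' >].
have [[C DC] Cmax] : exists C, premaximal le C.
  apply: (ZL_preorder (exist _ K DK)) => [C|C1 C2 C3 /asboolP C12 /asboolP C23|Cs totCs].
  - exact/asboolP.
  - by apply/asboolP/(subset_trans C12).
  pose U := \bigcup_(C in K |` [set sval C | C in Cs]) C.
  have Uchain C : (K |` [set sval C | C in Cs]) C -> D C.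
    by case=> [->|[[C' DC'] _ <-]].
  have DU : D U.
    split; first apply: gideal_bigcup_chain.
    - by exists K; left.
    - by move=> C /Uchain [].
    - move=> _ _ [->|[C1 Cs1 <-]] [->|[C2 Cs2 <-]].
      + by left.
      + by left; case: (svalP C2).
      + by right; case: (svalP C1).
      + by have [/asboolP|/asboolP] := totCs _ _ Cs1 Cs2; [left | right].
    - by exists K => //; left.
    - by move=> x [C /Uchain [_ _ CL _]]; apply: CL.
    - by move=> x [Qx [C /Uchain [_ _ _ QCK] Cx]]; apply: QCK.
  exists (exist _ U DU) => C CsC; apply/asboolP => x Cx.
  by exists (sval C) => //; right; exists C.
by exists C => // C' DC' /asboolT /(Cmax (exist _ C' DC')) /asboolP.
Qed.

Definition complement (K L Q C : set A) :=
  [/\ gideal C, K `<=` C, C `<=` L, Q `&` C `<=` K & L `<=` addI Q C].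

Lemma exists_complement K L Q : gideal K -> gideal L -> gideal Q ->
    K `<=` Q -> Q `<=` L -> (forall j y, jac j -> L y -> K (j * y)) ->
  exists C, complement K L Q C.
Proof.
move=> gK gL gQ KQ QL JLK.
have [C [gC KC CL QCK] Cmax] :=
  exists_maximal_partial_complement Q gK gL (subset_trans KQ QL).
exists C; split=> //; apply: contrapT => LQC; have gQC := gideal_addI gQ gC.
have KQC : K `<=` addI Q C by move=> x /KQ; apply: subset_addIl.
have [N [[_ gN KN _ Ncov] NL NQC]] :=
  exists_covby_not_sub gK gL gQC KQC (addI_subset gL QL CL) LQC JLK.
have QCNK : Q `&` addI C N `<=` K.
  move=> x [Qx /addIP [c [n [Cc Nn xE]]]].
  have [NQCK|] := Ncov _ (gideal_setI gN gQC) (fun x Kx => conj (KN x Kx) (KQC x Kx))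
    (fun x => @proj1 _ _); last by move=> NNQC; case: NQC => y /NNQC [].
  have Kn : K n.
    apply: NQCK; split=> //; apply/addIP; exists x, (- c).
    by split; [| exact: (gidealN gC) | rewrite xE addrAC subrr add0r].
  by apply: QCK; split=> //; rewrite xE; apply: (gidealD gC) => //; apply: KC.
have CNC : addI C N `<=` C.
  apply: Cmax; last exact: subset_addIl.
  by split; [exact: gideal_addI | move=> x /KC; apply: subset_addIl | exact: addI_subset |].
by apply: NQC => x Nx; apply/subset_addIr/CNC/subset_addIr.
Qed.

Lemma complement_chain K L (N : nat -> set A) : gideal K -> gideal L ->
    (forall j y, jac j -> L y -> K (j * y)) ->
    (forall i, interval K L (N i)) -> (forall i, N i `<=` N i.+1) ->
  exists C : nat -> set A, forall i, complement K L (N i) (C i) /\ C i.+1 `<=` C i.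
Proof.
move=> gK gL JLK NKL incN.
apply: (@dependent_choice _ (fun i => complement K L (N i)) (fun C' C => C' `<=` C)).
  by case: (NKL 0%N) => gN KN NL; apply: exists_complement.
move=> i C [gC KC CL NCK LNC].
case: (NKL i.+1) => gN KN _.
have [C' [gC' KC' C'C NCC'K CNC']] : exists C', complement K C (N i.+1 `&` C) C'.
  apply: exists_complement gK gC (gideal_setI gN gC) _ (fun x => @proj2 _ _) _.
    by move=> x Kx; split; [apply: KN | apply: KC].
  by move=> j y Jj /CL; apply: JLK.
exists C'; split=> //; split=> //.
- by move=> x /C'C /CL.
- by move=> x [Nx C'x]; apply: NCC'K; split=> //; split=> //; apply: C'C.
move=> x Lx; have /addIP [a [c [Na Cc xE]]] := LNC x Lx.
have /addIP [q [c' [[Nq _] C'c' cE]]] := CNC' c Cc.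
apply/addIP; exists (a + q), c'; split=> //; last by rewrite xE cE addrA.
by apply: (gidealD gN) => //; apply: incN.
Qed.

(* An ascending chain N_i has descending complements C_i; once DCC makes the
   C_i stationary, L = N_i + C_i and N_(i+1) ∩ C_(i+1) ⊆ K force N_(i+1) = N_i. *)
Lemma ACC_interval_semisimple K L : gideal K -> gideal L ->
  (forall j y, jac j -> L y -> K (j * y)) -> ACC (interval K L).
Proof.
move=> gK gL JLK; apply/ACCP => N NKL incN.
have [C CP] := complement_chain gK gL JLK NKL incN.
have gC i : gideal (C i) by case: (CP i) => -[].
have [M CM] := gideal_dcc gC (fun i => (CP i).2).
suff decN k : (M <= k)%N -> N k.+1 `<=` N k.
  exists M => k /subnK <-; elim: (k - M)%N => [|j IHj] // x.
  by move=> /(decN _ (leq_addl _ _)) /IHj.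
move=> Mk x Nx; case: (NKL k) => gN KN _; case: (NKL k.+1) => gN' _ NL'.
case: (CP k) => -[_ _ _ _ LNC] _; have /addIP [a [c [Na Cc xE]]] := LNC x (NL' x Nx).
have Nc : N k.+1 c.
  have -> : c = x - a by rewrite xE addrC addKr.
  by apply: (gidealB gN') => //; apply: incN.
have Cc' : C k.+1 c by apply/(CM k.+1 (leqW Mk) c).2/(CM k Mk c).1.
case: (CP k.+1) => -[_ _ _ NCK _] _.
by rewrite xE; apply: (gidealD gN) => //; apply/KN/NCK.
Qed.

(** * Nilpotence of the radical *)

Inductive gspan (G : set A) : set A :=
| gspan0 : gspan G 0
| gspan_gen x : G x -> gspan G x
| gspanD x y : gspan G x -> gspan G y -> gspan G (x + y)
| gspanM n s x : comp n s -> S s -> gspan G x -> gspan G (s * x).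

Lemma gideal_gspan G : G `<=` S -> (forall x, G x -> exists n, comp n x) ->
  gideal (gspan G).
Proof.
move=> GS G_homog; split; first split.
- move=> x; elim=> [|y /GS //|y z _ Sy _ Sz|n s y _ Ss _ Sy] //.
    exact: SD.
  exact: SM.
- exact: gspan0.
- exact: gspanD.
- move=> a x Sa Gx.
  apply: (homog_ind (P := fun a => gspan G (a * x)) S_hproj) Sa => [|u v|n u Su cu].
  + by rewrite mul0r; apply: gspan0.
  + by rewrite mulrDl; apply: gspanD.
  + exact: gspanM cu Su Gx.
move=> n x Gx; elim: Gx n => [|y Gy|y z _ IHy _ IHz|p s y cs Ss _ IHy] n.
- by rewrite hproj0; apply: gspan0.
- have [m cy] := G_homog y Gy; rewrite (hproj_homog_eq _ cy).
  by case: eqP => _; [apply: gspan_gen | apply: gspan0].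
- by rewrite hprojD; apply: gspanD (IHy n) (IHz n).
- by rewrite (hprojMl _ _ cs); apply: gspanM cs Ss (IHy _).
Qed.

Lemma gspan_min G I : gideal I -> G `<=` I -> gspan G `<=` I.
Proof.
move=> gI GI x; elim=> [|y /GI|y z _ Iy _ Iz|n s y _ Ss _ Iy] //.
- exact: (gideal0 gI).
- exact: (gidealD gI).
- exact: (gidealM gI).
Qed.

Definition jacprod (P : set A) :=
  [set x | exists q j n m, [/\ P q, comp n q, jac j, comp m j & x = q * j]].

Fixpoint jacpow k := if k is k'.+1 then gspan (jacprod (jacpow k')) else S.

Lemma gideal_jacpow k : gideal (jacpow k).
Proof.
elim: k => [|k IHk] /=; first exact: gidealS.
apply: gideal_gspan => _ [q [j [n [m [Pq cq [Sj _] cj ->]]]]].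
  by apply: SM => //; apply: gideal_sub IHk _ Pq.
by exists (n + m); apply: compM.
Qed.

Lemma jacpowS_sub k : jacpow k.+1 `<=` jacpow k.
Proof.
elim: k => [|k IHk]; first exact: gideal_sub (gideal_jacpow 1).
apply: gspan_min (gideal_jacpow k.+1) _ => _ [q [j [n [m [Pq cq Jj cj ->]]]]].
by apply: gspan_gen; exists q, j, n, m; split=> //; apply: IHk.
Qed.

Lemma jac_sub_jacpow1 : jac `<=` jacpow 1.
Proof.
apply: (homog_ind (gideal_hproj gideal_jac)) => [|x y|n x Jx cx].
- exact: gspan0.
- exact: gspanD.
apply: gspan_gen; exists 1, x, 0, n; split=> //; rewrite ?mul1r //; exact: comp1.
Qed.

Lemma jacM_jacpow k j y : jac j -> jacpow k y -> jacpow k.+1 (j * y).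
Proof.
elim: k j y => [|k IHk] j y Jj Py; first exact/jac_sub_jacpow1/jacMr.
move: Jj; apply: (homog_ind (P := fun j => jacpow k.+2 (j * y)) (gideal_hproj gideal_jac)).
- by rewrite mul0r; apply: gspan0.
- by move=> u v Pu Pv; rewrite mulrDl; apply: gspanD.
move=> p {}j Jj cj; elim: Py p j Jj cj => [|_ [q [j' [n [m [Pq cq Jj' cj' ->]]]]]||].
- by move=> p j _ _; rewrite mulr0; apply: gspan0.
- move=> p j Jj cj.
- apply: gspan_gen; exists (j * q), j', (p + n), m; rewrite mulrA; split=> //.
    exact: IHk.
  exact: compM.
- move=> u v _ IHu _ IHv p j Jj cj.
  by rewrite mulrDr; apply: gspanD; [apply: IHu cj | apply: IHv cj].
move=> n s x cs Ss _ IHx p j Jj cj.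
by rewrite mulrA; apply: IHx (jacMr Jj Ss) (compM cj cs).
Qed.

Definition ann_in (I L : set A) :=
  [set z | L z /\ forall b s, I b -> S s -> b * (s * z) = 0].

Lemma gideal_ann_in I L : gideal I -> gideal L -> gideal (ann_in I L).
Proof.
move=> gI gL; split; first split.
- by move=> z [/(gideal_sub gL)].
- by split=> [|b s _ _]; rewrite ?mulr0 //; apply: gideal0.
- move=> u v [Lu Iu] [Lv Iv]; split=> [|b s Ib Ss]; first exact: (gidealD gL).
  by rewrite !mulrDr Iu ?Iv ?addr0.
- move=> t z St [Lz Iz]; split=> [|b s Ib Ss]; first exact: (gidealM gL).
  by rewrite [s * _]mulrA Iz //; apply: SM.
move=> k z [Lz Iz]; split=> [|b s Ib]; first exact: (gideal_hproj gL).
set zk := hproj k z; move: b Ib s.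
apply: (homog_ind (P := fun b => forall s, S s -> b * (s * zk) = 0) (gideal_hproj gI)).
- by move=> s _; rewrite mul0r.
- by move=> u v Hu Hv s Ss; rewrite mulrDl Hu // Hv // addr0.
move=> p u Iu cu.
apply: (homog_ind (P := fun s => u * (s * zk) = 0) S_hproj) => [|s1 s2 H1 H2|q s Ss cs].
- by rewrite !mul0r mulr0.
- by rewrite mulrDl mulrDr H1 H2 addr0.
have := congr1 (hproj (p + q + k)) (Iz u s Iu Ss).
rewrite mulrA (hprojMl _ _ (compM cu cs)) hproj0 mulrA.
by rewrite [p + q + k]addrC addrK.
Qed.

Lemma gspan_jacprod_mul_neq0 I b x : gspan (jacprod I) b -> b * x != 0 ->
  exists c j, [/\ I c, jac j & c * (j * x) != 0].
Proof.
elim=> [|_ [q [j [n [m [Iq _ Jj _ ->]]]]]|u v _ IHu _ IHv|n s u _ _ _ IHu].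
- by rewrite mul0r eqxx.
- by rewrite -mulrA => qjx0; exists q, j.
- rewrite mulrDl; have [-> ux0|ux0 _] := eqVneq (u * x) 0; last exact: IHu.
  by apply: IHv; rewrite add0r in ux0.
rewrite -mulrA => sux0; apply: IHu; apply: contraNneq sux0 => ->.
by rewrite mulr0.
Qed.

(* A minimal L with I L <> 0 has a homogeneous x with I x <> 0; as I = I J,
   minimality gives L = J x, so x = j0 x for some j0 in J of degree 0.  But
   L/ann_in I L is simple, so j0 x = x lies in ann_in I L: a contradiction. *)
Lemma gideal_nakayama I : gideal I -> I `<=` gspan (jacprod I) -> I `<=` [set 0].
Proof.
move=> gI IJI a Ia; apply: contrapT => /eqP a0.
pose F := [set L | gideal L /\ exists b y, [/\ I b, L y & b * y != 0]].
have FS : F S by split; [exact: gidealS | exists a, 1; rewrite mulr1].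
have [L [gL [b [y [Ib Ly by0]]]] Lmin] :=
  gideal_minimal (fun L => @proj1 _ _) (ex_intro _ _ FS).
have [m [x [Lx cx bx0]]] : exists m x, [/\ L x, comp m x & b * x != 0].
  apply: contrapT => nox; case/negP: by0; apply/eqP.
  apply: (homog_ind (P := fun y => b * y = 0) (gideal_hproj gL)) Ly.
  - by rewrite mulr0.
  - by move=> u v bu bv; rewrite mulrDr bu bv addr0.
  - by move=> n u Lu cu; apply/eqP/negPn/negP => bu0; apply: nox; exists n, u.
have [c [j [Ic Jj cjx0]]] := gspan_jacprod_mul_neq0 (IJI b Ib) bx0.
have Sj := Jj.1.
have [j' Jj' j'x] : rmulI jac x x.
  apply: (Lmin _ _ _ x Lx); last exact: rmulI_subset (gideal_sub gideal_jac) gL Lx.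
  split; first exact: gideal_rmulI gideal_jac cx (gideal_sub gL Lx).
  by exists c, (j * x); split=> //; exists j.
have xE : x = hproj 0 j' * x.
  by have := hprojMr m j' cx; rewrite j'x (hproj_homog_eq m cx) eqxx subrr.
have covL : covby (ann_in I L) L.
  split=> //; first exact: gideal_ann_in.
  - by move=> z [].
  - by move=> /(_ x Lx) [_ /(_ c j Ic Sj) /eqP]; apply/negP.
  move=> Q gQ annQ QL.
  have [[b' [z [Ib' Qz b'z0]]]|noQ] := EM (exists b z, [/\ I b, Q z & b * z != 0]).
    by right; apply: Lmin QL; split=> //; exists b', z.
  left=> z Qz; split=> [|b' s Ib' Ss]; first exact: QL.
  apply/eqP/negPn/negP => nz; apply: noQ; exists b', (s * z).
  by split=> //; apply: (gidealM gQ).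
have [_ /(_ c j Ic Sj) /eqP] := (gideal_hproj gideal_jac 0 Jj').2 _ _ covL x Lx.
by rewrite -xE; apply/negP.
Qed.

Lemma jacpow_nil : exists n, jacpow n `<=` [set 0].
Proof.
have [n Jn] := gideal_dcc gideal_jacpow jacpowS_sub.
by exists n; apply: gideal_nakayama (gideal_jacpow n) _ => x /(Jn n.+1 (leqnSn n) x).2.
Qed.

Lemma ACC_interval_jacpow k : ACC (interval (jacpow k) S).
Proof.
elim: k => [|k IHk].
  apply/ACCP => N NS _; exists 0%N => k _ x.
  by case: (NS k) => _ _ /(_ x) NSx /NSx; case: (NS 0%N) => _ SN0 _; apply: SN0.
apply: ACC_interval_trans (gideal_jacpow k) gidealS (@jacpowS_sub k)
  (gideal_sub (gideal_jacpow k)) _ IHk.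
apply: ACC_interval_semisimple (gideal_jacpow _) (gideal_jacpow _) _ => j y Jj.
exact: jacM_jacpow.
Qed.

Theorem gideal_acc : ACC gideal.
Proof.
have [n Jn0] := jacpow_nil.
apply: (ACC_sub _ (@ACC_interval_jacpow n)) => I gI.
by split=> // [x /Jn0 ->|]; [apply: (gideal0 gI) | apply: (gideal_sub gI)].
Qed.

End GradedAlgebra.

(** * Cycles and boundaries of dg-ideals *)

Section DifferentialGraded.
Variables (R : comPzRingType) (A : algType R) (comp : int -> A -> Prop) (d : A -> A).
Hypotheses (comp_submod : grading_submod comp) (comp_direct : grading_direct comp)
  (comp_mul : grading_mul comp) (d_linear : linear d)
  (d_homog : forall n x, comp n x -> comp (n + 1) (d x))
  (dK : forall x, d (d x) = 0)
  (d_leibniz : forall n a b, comp n a ->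
     d (a * b) = d a * b + (-1) ^+ `|n|%N * (a * d b)).

Local Notation hproj := (hproj comp_direct).
Local Notation gideal := (gideal comp_direct (kerd d)).

Lemma dD : {morph d : x y / x + y}.
Proof. by move=> x y; have := d_linear 1 x y; rewrite !scale1r. Qed.

Lemma d0 : d 0 = 0.
Proof. by apply: (addrI (d 0)); rewrite -dD !addr0. Qed.

Lemma dN x : d (- x) = - d x.
Proof. by apply: (addrI (d x)); rewrite -dD !subrr d0. Qed.

Lemma dB x y : d (x - y) = d x - d y.
Proof. by rewrite dD dN. Qed.

Lemma hproj_d n x : hproj n (d x) = d (hproj (n - 1) x).
Proof. exact: (hproj_shift comp_submod comp_direct dD d_homog). Qed.

Lemma kerd0 : kerd d 0. Proof. exact: d0. Qed.

Lemma kerd1 : kerd d 1.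
Proof.
have := d_leibniz 1 (comp1 comp_mul); rewrite !mulr1 expr0 !mul1r => d1E.
by apply: (addrI (d 1)); rewrite addr0 -d1E.
Qed.

Lemma kerdD x y : kerd d x -> kerd d y -> kerd d (x + y).
Proof. by rewrite /kerd dD => -> ->; rewrite addr0. Qed.

Lemma kerdN x : kerd d x -> kerd d (- x).
Proof. by rewrite /kerd dN => ->; rewrite oppr0. Qed.

Lemma kerd_hproj n x : kerd d x -> kerd d (hproj n x).
Proof. by rewrite /kerd -[n](addrK 1) -hproj_d => ->; apply: hproj0. Qed.

Lemma kerdM x y : kerd d x -> kerd d y -> kerd d (x * y).
Proof.
move=> dx dy; move: x dx.
apply: (homog_ind comp_submod (P := fun x => kerd d (x * y)) kerd_hproj).
- by rewrite mul0r; apply: kerd0.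
- by move=> u v; rewrite mulrDl; apply: kerdD.
by move=> n u du cu; rewrite /kerd (d_leibniz y cu) du dy mul0r !mulr0 addr0.
Qed.

Lemma kerd_gideal_dcc : kerd_graded_artinian comp d -> DCC gideal.
Proof.
apply: DCC_sub => I [[kerdI I0 ID IM] I_hproj]; split; first by split.
exact/(graded_subsetP comp_submod).
Qed.

Lemma kerd_gideal_acc : kerd_graded_artinian comp d -> ACC gideal.
Proof.
move/kerd_gideal_dcc.
exact: (gideal_acc comp_submod comp_mul kerd0 kerd1 kerdD kerdN kerdM kerd_hproj).
Qed.

Definition cycles (I : set A) := I `&` kerd d.
Definition boundaries (I : set A) := d @` I.

Lemma gideal_cycles I : dg_ideal comp d I -> gideal (cycles I).
Proof.
case=> [[_ I0 ID IM] /(graded_subsetP comp_submod _ I0) I_hproj _].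
split; first split.
- by move=> x [].
- by split; last exact: kerd0.
- by move=> x y [Ix dx] [Iy dy]; split; [apply: ID | apply: kerdD].
- by move=> a x da [Ix dx]; split; [apply: IM | apply: kerdM].
- by move=> n x [Ix dx]; split; [apply: I_hproj | apply: kerd_hproj].
Qed.

Lemma gideal_boundaries I : dg_ideal comp d I -> gideal (boundaries I).
Proof.
case=> [[_ I0 ID IM] /(graded_subsetP comp_submod _ I0) I_hproj _].
split; first split.
- by move=> _ [y _ <-]; apply: dK.
- by exists 0; rewrite ?d0.
- by move=> _ _ [y Iy <-] [z Iz <-]; exists (y + z); rewrite ?dD //; apply: ID.
- move=> a _ da [y Iy <-]; move: a da.
  apply: (homog_ind comp_submod (P := fun a => boundaries I (a * d y)) kerd_hproj).
  + by exists 0; rewrite ?d0 ?mul0r.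
  + move=> u v [yu Iu yuE] [yv Iv yvE].
    by exists (yu + yv); rewrite ?dD ?yuE ?yvE ?mulrDl //; apply: ID.
  (* for a homogeneous cycle u, u * d y = ± d (u * y) *)
  move=> n u du cu; have := d_leibniz y cu; rewrite du mul0r add0r -signr_odd.
  case: odd => /= dE; last by exists (u * y); [apply: IM | rewrite dE expr0 mul1r].
  by exists (- (u * y)); [rewrite -mulNr; apply: IM | rewrite dN dE expr1 mulN1r opprK].
- by move=> n _ [y Iy <-]; exists (hproj (n - 1) y); [apply: I_hproj | rewrite hproj_d].
Qed.

Lemma dg_ideal_subset I I' : dg_ideal comp d I -> dg_ideal comp d I' ->
  I `<=` I' -> cycles I' `<=` cycles I -> boundaries I' `<=` boundaries I -> I' `<=` I.
Proof.
move=> [[_ _ ID _] _ _] [[_ _ ID' IM'] _ _] II' ZZ BB x I'x.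
have [y Iy dyE] := BB _ (imageP d I'x).
have [Ixy _] : cycles I (x - y).
  apply: ZZ; split; last by rewrite /kerd dB dyE subrr.
  by apply: ID' => //; rewrite -mulN1r; apply/IM'/II'.
by rewrite -(subrK y x); apply: ID.
Qed.

Lemma dg_noetherian_of_acc : ACC gideal -> dg_noetherian comp d.
Proof.
move=> /ACCP acc; apply/ACCP => I dgI incI; have incIM := subset_chain incI.
have [M1 ZM] := acc (cycles \o I) (fun k => gideal_cycles (dgI k))
  (fun k => setSI (incI k)).
have [M2 BM] := acc (boundaries \o I) (fun k => gideal_boundaries (dgI k))
  (fun k => image_subset (incI k)).
exists (maxn M1 M2) => k; rewrite geq_max => /andP[M1k M2k].
apply: dg_ideal_subset (dgI _) (dgI _) _ _ _; first by apply: incIM; rewrite geq_max M1k.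
  by move=> x /(ZM k M1k) [IM1x dx]; split=> //; apply: incIM (leq_maxl M1 M2) _ IM1x.
by move=> _ /(BM k M2k) [y IM2y <-]; exists y => //; apply: incIM (leq_maxr M1 M2) _ IM2y.
Qed.

Lemma dg_artinian_of_dcc : DCC gideal -> dg_artinian comp d.
Proof.
move=> dcc I dgI decI; have decIM := subset_chain_dec decI.
have [M1 ZM] := dcc (cycles \o I) (fun k => gideal_cycles (dgI k))
  (fun k => setSI (decI k)).
have [M2 BM] := dcc (boundaries \o I) (fun k => gideal_boundaries (dgI k))
  (fun k => image_subset (decI k)).
exists (maxn M1 M2) => k; rewrite geq_max => /andP[M1k M2k] x.
split; first by apply: decIM; rewrite geq_max M1k.
apply: dg_ideal_subset (dgI _) (dgI _) _ _ _ x; first by apply: decIM; rewrite geq_max M1k.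
  move=> y [IMy dy]; apply/(ZM k M1k y).2; split=> //.
  exact: decIM (leq_maxl M1 M2) _ IMy.
move=> _ [y IMy <-]; apply/(BM k M2k _).2; exists y => //.
exact: decIM (leq_maxr M1 M2) _ IMy.
Qed.

End DifferentialGraded.

Theorem proposition2p4 (R : comPzRingType) (A : algType R)
  (comp : int -> A -> Prop) (d : A -> A) :
  is_dg_algebra comp d ->
  kerd_graded_artinian comp d ->
  dg_noetherian comp d /\ dg_artinian comp d.
Proof.
move=> [[submod direct mul] [lin homog dK leibniz]] artinian.
split; [apply: dg_noetherian_of_acc | apply: dg_artinian_of_dcc] => //.
- exact: kerd_gideal_acc.
- exact: kerd_gideal_dcc.
Qed.
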